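(* Let $F$ be a posheaf on a locale $X$. The following are equivalent: (1) $F$ is complete. (2) For every downsheaf $S$ of $F$, $\bigvee S$ exists and extends to a global point $p\in F(1_X)$ (i.e. $p|_{\mathrm{dom}(\bigvee S)}=\bigvee S$) such that for each $u\in\mathcal{O}(X)$, $p|_u$ is the least element $z$ of $F(u)$ satisfying $S^u\subseteq\downarrow z$. (3) For every subsheaf $S$ of $F$, $\bigvee S$ exists and extends to a global point $p\in F(1_X)$ such that for each $u\in\mathcal{O}(X)$, $p|_u$ is the least element $z$ of $F(u)$ satisfying $S^u\subseteq\downarrow z$. (4) Every $F(u)$ is a complete lattice, and for all $v\le u$ the restriction map $F(u)\to F(v)$ is surjective and has both a left adjoint and a right adjoint.
   Context: Let $X$ be a locale with frame of opens $\mathcal{O}(X)$ and top element $1_X$. A posheaf on $X$ is a sheaf of sets $F$ with (POS1) each $F(u)$ a poset; (POS2) restriction maps $F(u)\to F(v)$, $x\mapsto x|_v$ ($v\le u$), order-preserving; (POS3) if $u=\bigvee_i u_i$ and $s,t\in F(u)$ satisfy $s|_{u_i}\le t|_{u_i}$ for all $i$, then $s\le t$. A point of $F$ is a morphism $p:\hat1\to F$ with $\hat1$ a subsheaf of the terminal sheaf; $\mathrm{dom}(p)$ is the largest open $u$ with $\hat1(u)\neq\emptyset$; a point is identified with an element of $F(\mathrm{dom}(p))$; a global point is one with domain $1_X$. Points are ordered by $p_1\le p_2$ iff $\mathrm{dom}(p_1)\le\mathrm{dom}(p_2)$ and $p_1\le p_2|_{\mathrm{dom}(p_1)}$. For a subsheaf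 $A$ of $F$, a point $x$ is an upper bound of $A$ if $y\le x$ for all points $y$ of $A$, and $\bigvee A$ is the least upper bound. For $u\in\mathcal{O}(X)$, $F^u$ is the restriction of $F$ to $\downarrow u$ (regarded also as a subsheaf of $F$), and for a subsheaf $S$, $S^u$ is its restriction to $\downarrow u$. A downsheaf of $F$ is a subsheaf $G$ with each $G(v)$ a down-set of $F(v)$. For $z\in F(u)$, $\downarrow z$ is the downsheaf of $F^u$ with $(\downarrow z)(v)=\{y\in F(v)\mid y\le z|_v\}$ for $v\le u$. $\mathbb{D}F$ is the sheaf with $\mathbb{D}F(u)$ = the set of downsheaves of $F^u$, restriction $S\mapsto S^v$, ordered by inclusion, and $\downarrow:F\to\mathbb{D}F$, $z\mapsto\downarrow z$ is the principal ideal embedding. For order-preserving morphisms of posheaves $\alpha:F\to G$, $\beta:G\to F$, $\alpha\dashv\beta$ means $\alpha x\le y\iff x\le\beta y$ for all points $x$ of $F$, $y$ of $G$. $F$ is complete if the principal ideal embedding $\downarrow:F\to\mathbb{D}F$ has a left adjoint. *)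

Set Implicit Arguments.
Unset Strict Implicit.

Record Frame := {
  opens :> Type;
  ole : opens -> opens -> Prop;
  ole_refl : forall a, ole a a;
  ole_trans : forall a b c, ole a b -> ole b c -> ole a c;
  ole_antisym : forall a b, ole a b -> ole b a -> a = b;
  osup : (opens -> Prop) -> opens;
  osup_ub : forall (C : opens -> Prop) v, C v -> ole v (osup C);
  osup_least : forall (C : opens -> Prop) w,
      (forall v, C v -> ole v w) -> ole (osup C) w;
  omeet : opens -> opens -> opens;
  omeet_l : forall a b, ole (omeet a b) a;
  omeet_r : forall a b, ole (omeet a b) b;
  omeet_glb : forall a b c, ole c a -> ole c b -> ole c (omeet a b);
  otop : opens;
  otop_max : forall a, ole a otop;
  odistr : forall a (C : opens -> Prop),
      ole (omeet a (osup C)) (osup (fun w => exists v, C v /\ w = omeet a v))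
}.

Arguments ole {X} : rename.
Arguments osup {X} : rename.
Arguments omeet {X} : rename.
Arguments otop X : rename.

(* A cover of u is a family C of opens below u with u <= \/ C. *)
Record Sheaf (X : Frame) := {
  sec :> X -> Type;
  res : forall u v : X, ole v u -> sec u -> sec v;
  res_id : forall u (h : ole u u) x, res h x = x;
  res_comp : forall u v w (h1 : ole v u) (h2 : ole w v) (h3 : ole w u) x,
      res h2 (res h1 x) = res h3 x;
  sh_local : forall (u : X) (C : X -> Prop) (hC : forall v, C v -> ole v u),
      ole u (osup C) ->
      forall x y : sec u,
        (forall v (hv : C v), res (hC v hv) x = res (hC v hv) y) -> x = y;
  sh_glue : forall (u : X) (C : X -> Prop) (hC : forall v, C v -> ole v u),
      ole u (osup C) ->
      forall s : forall v, C v -> sec v,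
        (forall v w (hv : C v) (hw : C w),
            res (omeet_l v w) (s v hv) = res (omeet_r v w) (s w hw)) ->
        exists x : sec u, forall v (hv : C v), res (hC v hv) x = s v hv
}.

Arguments res {X} s {u v} h x : rename.

Record Posheaf (X : Frame) := {
  psh :> Sheaf X;
  ple : forall u, psh u -> psh u -> Prop;
  ple_refl : forall u (x : psh u), ple x x;
  ple_trans : forall u (x y z : psh u), ple x y -> ple y z -> ple x z;
  ple_antisym : forall u (x y : psh u), ple x y -> ple y x -> x = y;
  res_mono : forall u v (h : ole v u) (x y : psh u),
      ple x y -> ple (res psh h x) (res psh h y);
  pos3 : forall (u : X) (C : X -> Prop) (hC : forall v, C v -> ole v u),
      ole u (osup C) ->
      forall s t : psh u,
        (forall v (hv : C v), ple (res psh (hC v hv) s) (res psh (hC v hv) t)) ->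
        ple s t
}.

Arguments ple {X} F u x y : rename.

Section Defs.
Variable X : Frame.

Definition subfam (F : Sheaf X) := forall u : X, F u -> Prop.

Definition is_subsheaf (F : Sheaf X) (A : subfam F) : Prop :=
  (forall (u v : X) (h : ole v u) x, A u x -> A v (res F h x)) /\
  (forall (u : X) (C : X -> Prop) (hC : forall v, C v -> ole v u),
      ole u (osup C) ->
      forall x : F u, (forall v (hv : C v), A v (res F (hC v hv) x)) -> A u x).

Definition incl (F : Sheaf X) (A B : subfam F) : Prop :=
  forall v y, A v y -> B v y.

(* S^u : restriction of S to the opens below u (as a subsheaf of F). *)
Definition res_sub (F : Sheaf X) (S : subfam F) (u : X) : subfam F :=
  fun v y => S v y /\ ole v u.

Definition is_downsheaf (F : Posheaf X) (G : subfam F) : Prop :=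
  is_subsheaf G /\ (forall v x y, ple F v x y -> G v y -> G v x).

(* Downsheaf of F^u, regarded as a subsheaf of F (supported below u). *)
Definition is_downsheaf_in (F : Posheaf X) (u : X) (G : subfam F) : Prop :=
  is_downsheaf G /\ (forall v y, G v y -> ole v u).
Arguments is_downsheaf_in : clear implicits.

Definition dn (F : Posheaf X) (u : X) (z : F u) : subfam F :=
  fun v y => exists h : ole v u, ple F v y (res F h z).

Definition point (F : Sheaf X) := {u : X & F u}.
Definition dom (F : Sheaf X) (p : point F) : X := projT1 p.

Definition pt_le (F : Posheaf X) (p q : point F) : Prop :=
  exists h : ole (projT1 p) (projT1 q),
    ple F (projT1 p) (projT2 p) (res F h (projT2 q)).

Definition pt_in (F : Sheaf X) (A : subfam F) (p : point F) : Prop :=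
  A (projT1 p) (projT2 p).

Definition is_ub (F : Posheaf X) (A : subfam F) (p : point F) : Prop :=
  forall y, pt_in A y -> pt_le y p.

Definition is_lub (F : Posheaf X) (A : subfam F) (p : point F) : Prop :=
  is_ub A p /\ forall q, is_ub A q -> pt_le p q.

Definition is_least_bound (F : Posheaf X) (S : subfam F) (u : X) (z : F u) : Prop :=
  incl (res_sub S u) (dn z) /\
  forall z' : F u, incl (res_sub S u) (dn z') -> ple F u z z'.
Arguments is_least_bound {F} S u z.

Definition sup_extends (F : Posheaf X) (S : subfam F) : Prop :=
  exists b : point F, is_lub S b /\
    exists p : F (otop X),
      res F (otop_max (projT1 b)) p = projT2 b /\
      forall u : X, is_least_bound S u (res F (otop_max u) p).

Definition DF (F : Posheaf X) (u : X) := {G : subfam F | is_downsheaf_in F u G}.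

Lemma res_sub_downsheaf_in (F : Posheaf X) (u v : X) (h : ole v u) (G : subfam F) :
  is_downsheaf_in F u G -> is_downsheaf_in F v (res_sub G v).
Proof.
  intros [[[Hr Hl] Hd] Hs]. split; [split; [split|]|].
  - intros a b hab x [Hx Ha]. split; [apply Hr; exact Hx | exact (ole_trans hab Ha)].
  - intros w C hC Hcov x Hx. split.
    + apply (Hl w C hC Hcov x). intros c hc. exact (proj1 (Hx c hc)).
    + apply (ole_trans Hcov). apply osup_least. intros c hc. exact (proj2 (Hx c hc)).
  - intros a x y Hxy [Hy Ha]. split; [exact (Hd a x y Hxy Hy) | exact Ha].
  - intros a y [_ Ha]. exact Ha.
Qed.

Definition DFres (F : Posheaf X) (u v : X) (h : ole v u) (S : DF F u) : DF F v :=
  exist _ (res_sub (proj1_sig S) v) (res_sub_downsheaf_in h (proj2_sig S)).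

Lemma dn_downsheaf_in (F : Posheaf X) (u : X) (z : F u) :
  is_downsheaf_in F u (dn z).
Proof.
  split; [split; [split|]|].
  - intros a b hba x [ha Hx].
    exists (ole_trans hba ha).
    rewrite <- (res_comp ha hba (ole_trans hba ha) z).
    apply res_mono. exact Hx.
  - intros w C hC Hcov x Hx.
    assert (hw : ole w u).
    { apply (ole_trans Hcov). apply osup_least. intros c hc.
      destruct (Hx c hc) as [hcu _]. exact hcu. }
    exists hw. apply (@pos3 X F w C hC Hcov). intros c hc.
    destruct (Hx c hc) as [hcu Hc].
    rewrite (res_comp hw (hC c hc) hcu z). exact Hc.
  - intros a x y Hxy [ha Hy]. exists ha. exact (ple_trans Hxy Hy).
  - intros a y [ha _]. exact ha.
Qed.

Definition DFdn (F : Posheaf X) (u : X) (z : F u) : DF F u :=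
  exist _ (dn z) (dn_downsheaf_in z).

Definition DFpoint (F : Posheaf X) := {u : X & DF F u}.

Definition DFpt_le (F : Posheaf X) (p q : DFpoint F) : Prop :=
  exists h : ole (projT1 p) (projT1 q),
    incl (proj1_sig (projT2 p)) (proj1_sig (DFres h (projT2 q))).

(* F is complete: the principal ideal embedding has a left adjoint, i.e. an
   order-preserving sheaf morphism L : DF -> F with
   L S <= y  <->  S <= down y   for all points S of DF and y of F. *)
Definition complete (F : Posheaf X) : Prop :=
  exists L : forall u : X, DF F u -> F u,
    (forall (u v : X) (h : ole v u) (S : DF F u),
        L v (DFres h S) = res F h (L u S)) /\
    (forall (u : X) (S T : DF F u),
        incl (proj1_sig S) (proj1_sig T) -> ple F u (L u S) (L u T)) /\
    (forall (S : DFpoint F) (y : point F),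
        pt_le (existT _ (projT1 S) (L (projT1 S) (projT2 S))) y <->
        DFpt_le S (existT _ (projT1 y) (DFdn (projT2 y)))).

Definition is_complete_lattice (F : Posheaf X) (u : X) : Prop :=
  forall A : F u -> Prop, exists s : F u,
    (forall x, A x -> ple F u x s) /\
    (forall t, (forall x, A x -> ple F u x t) -> ple F u s t).

Definition res_adjoints (F : Posheaf X) : Prop :=
  forall (u v : X) (h : ole v u),
    (forall y : F v, exists x : F u, res F h x = y) /\
    (exists l : F v -> F u, forall (y : F v) (x : F u),
        ple F u (l y) x <-> ple F v y (res F h x)) /\
    (exists r : F v -> F u, forall (x : F u) (y : F v),
        ple F v (res F h x) y <-> ple F u x (r y)).

End Defs.

(* A posheaf is complete precisely when every downsheaf S of F^u has a least
   bound in F(u) and these least bounds are stable under restriction: the left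
   adjoint of the principal ideal embedding must send S to its least bound, and
   naturality of that adjoint is the stability.  From stable least bounds,
   every restriction-closed family T has least bounds in all F(u) compatibly
   with restriction (apply them to the downsheaf generated by T), which gives
   (2) and (3) by taking the global one, and gives (4) by taking T to be the
   restrictions of a subset of F(u), or a principal downsheaf.  Conversely,
   under (4) the least bound of S is the join of the left adjoints of its
   elements, and stability follows by gluing a section with a suitable element
   of F(v) and lifting the result to F(u) along a surjective restriction. *)

From Stdlib Require Import ClassicalEpsilon.

Lemma res_irrel {X : Frame} (F : Sheaf X) {u v : X} (h h' : ole v u) (x : F u) :
  res F h x = res F h' x.
Proof. rewrite <- (res_comp h (ole_refl v) h' x), res_id. reflexivity. Qed.

Lemma osup_mono {X : Frame} (A B : X -> Prop) :
  (forall c, A c -> B c) -> ole (osup A) (osup B).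
Proof. intros H. apply osup_least. intros c Hc. apply osup_ub. auto. Qed.

Definition pair_join {X : Frame} (w v : X) : X := osup (fun c => c = w \/ c = v).

Section GluePair.
Context {X : Frame} {F : Sheaf X} {w v : X} {a : F w} {b : F v}.
Hypothesis agree : res F (omeet_l w v) a = res F (omeet_r w v) b.

Lemma res_agree_below (e : X) (hw : ole e w) (hv : ole e v) :
  res F hw a = res F hv b.
Proof.
  pose proof (omeet_glb hw hv) as he.
  rewrite <- (res_comp (omeet_l w v) he hw), <- (res_comp (omeet_r w v) he hv).
  rewrite agree. reflexivity.
Qed.

Lemma pair_other_le {c : X} : c = w \/ c = v -> ~ ole c w -> ole c v.
Proof.
  intros [-> | ->] n; [exfalso; apply n |]; apply ole_refl.
Qed.

(* Deciding [ole c w] classically turns a proof of the disjunction into a section. *)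
Definition pair_section (c : X) (hc : c = w \/ c = v) : F c :=
  match excluded_middle_informative (ole c w) with
  | left hcw => res F hcw a
  | right n => res F (pair_other_le hc n) b
  end.

Lemma res_pair_section (c : X) (hc : c = w \/ c = v) {e : X} (he : ole e c) :
  (forall hw : ole e w, res F he (pair_section _ hc) = res F hw a) /\
  (forall hv : ole e v, res F he (pair_section _ hc) = res F hv b).
Proof.
  unfold pair_section.
  destruct (excluded_middle_informative (ole c w)) as [hcw | n]; split; intros h.
  - apply res_comp.
  - rewrite (res_comp hcw he (ole_trans he hcw)). apply res_agree_below.
  - rewrite (res_comp _ he (ole_trans he (pair_other_le hc n))).
    symmetry. apply res_agree_below.
  - apply res_comp.
Qed.

Lemma glue_pair : exists g : F (pair_join w v),
  (forall hw : ole w (pair_join w v), res F hw g = a) /\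
  (forall hv : ole v (pair_join w v), res F hv g = b).
Proof.
  assert (hC : forall c, c = w \/ c = v -> ole c (pair_join w v))
    by (intros c hc; apply osup_ub; exact hc).
  destruct (sh_glue hC (ole_refl _) (s := pair_section)) as [g Hg].
  { intros c c' hc hc'.
    assert (hcc : ole c w \/ ole c v)
      by (destruct hc as [-> | ->]; [left | right]; apply ole_refl).
    destruct hcc as [hcw | hcv].
    - pose proof (ole_trans (omeet_l c c') hcw) as he.
      rewrite (proj1 (res_pair_section _ hc (omeet_l c c')) he).
      rewrite (proj1 (res_pair_section _ hc' (omeet_r c c')) he). reflexivity.
    - pose proof (ole_trans (omeet_l c c') hcv) as he.
      rewrite (proj2 (res_pair_section _ hc (omeet_l c c')) he).
      rewrite (proj2 (res_pair_section _ hc' (omeet_r c c')) he). reflexivity. }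
  exists g. split.
  - intros hw. rewrite (res_irrel F hw (hC w (or_introl eq_refl))), Hg.
    rewrite <- (res_id (ole_refl w) (pair_section _ _)).
    rewrite (proj1 (res_pair_section _ _ (ole_refl w)) (ole_refl w)). apply res_id.
  - intros hv. rewrite (res_irrel F hv (hC v (or_intror eq_refl))), Hg.
    rewrite <- (res_id (ole_refl v) (pair_section _ _)).
    rewrite (proj2 (res_pair_section _ _ (ole_refl v)) (ole_refl v)). apply res_id.
Qed.

End GluePair.

Section Posheaf.
Context {X : Frame} {F : Posheaf X}.

Lemma least_bound_unique {S : subfam F} {u : X} {z z' : F u} :
  is_least_bound S z -> is_least_bound S z' -> z = z'.
Proof. intros [H1 H2] [H1' H2']. apply ple_antisym; auto. Qed.

Lemma least_bound_le {S : subfam F} {u v : X} (h : ole v u) {z : F u} {y : F v} :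
  is_least_bound S z -> S v y -> ple F v y (res F h z).
Proof.
  intros [Hub _] Hy. destruct (Hub v y (conj Hy h)) as [h' Hle].
  rewrite (res_irrel F h h'). exact Hle.
Qed.

Lemma least_bound_transfer {S T : subfam F} {u : X} {z : F u} :
  (forall z' : F u, incl (res_sub S u) (dn z') <-> incl (res_sub T u) (dn z')) ->
  is_least_bound S z -> is_least_bound T z.
Proof.
  intros H [Hub Hleast]. split.
  - apply H. exact Hub.
  - intros z' Hz'. apply Hleast, H. exact Hz'.
Qed.

Lemma is_least_bound_res_sub {S : subfam F} {u : X} {z : F u} :
  is_least_bound (res_sub S u) z <-> is_least_bound S z.
Proof.
  assert (E : forall z' : F u,
             incl (res_sub (res_sub S u) u) (dn z') <-> incl (res_sub S u) (dn z')).
  { intros z'. split; intros H e y Hy; apply H.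
    - destruct Hy as [Hy He]. repeat split; assumption.
    - destruct Hy as [[Hy _] He]. split; assumption. }
  split; apply least_bound_transfer; intros z'; [| symmetry]; apply E.
Qed.

Lemma dn_self {v : X} (y : F v) : dn y y.
Proof. exists (ole_refl v). rewrite res_id. apply ple_refl. Qed.

Lemma dn_least_bound {v : X} (y : F v) : is_least_bound (dn y) y.
Proof.
  split.
  - intros e t [Ht _]. exact Ht.
  - intros z' Hz'. destruct (Hz' v y (conj (dn_self y) (ole_refl v))) as [h Hle].
    rewrite res_id in Hle. exact Hle.
Qed.

(* Completeness in pointwise form: the left adjoint of [DFdn] must send a
   downsheaf of F^u to its least bound in F(u), and its naturality says
   that least bounds are stable under restriction. *)
Definition stable_least_bounds : Prop :=
  (forall u (S : DF F u), exists z : F u, is_least_bound (proj1_sig S) z) /\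
  (forall u v (h : ole v u) (S : DF F u) (z : F u),
      is_least_bound (proj1_sig S) z -> is_least_bound (proj1_sig S) (res F h z)).

Lemma complete_stable_least_bounds : complete F -> stable_least_bounds.
Proof.
  intros [L [HLres [_ HLadj]]].
  assert (HL : forall u (S : DF F u), is_least_bound (proj1_sig S) (L u S)).
  { intros u S. pose proof (proj2 (proj2_sig S)) as HSu. split.
    - destruct (proj1 (HLadj (existT _ u S) (existT _ u (L u S)))) as [h Hi].
      + exists (ole_refl u). cbn. rewrite res_id. apply ple_refl.
      + intros v y [Hy _]. exact (proj1 (Hi v y Hy)).
    - intros z' Hz'.
      destruct (proj2 (HLadj (existT _ u S) (existT _ u z'))) as [h Hle].
      + exists (ole_refl u). intros v y Hy.
        split; [apply Hz'; split; [exact Hy|] |]; exact (HSu v y Hy).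
      + cbn in Hle. rewrite res_id in Hle. exact Hle. }
  split.
  - intros u S. exists (L u S). apply HL.
  - intros u v h S z Hz.
    rewrite (least_bound_unique Hz (HL u S)), <- HLres.
    apply is_least_bound_res_sub. exact (HL v (DFres h S)).
Qed.

Lemma stable_least_bounds_complete : stable_least_bounds -> complete F.
Proof.
  intros [Hex Hres].
  pose (L := fun u (S : DF F u) =>
               proj1_sig (constructive_indefinite_description _ (Hex u S))).
  assert (HL : forall u S, is_least_bound (proj1_sig S) (L u S))
    by (intros u S; exact (proj2_sig (constructive_indefinite_description _ (Hex u S)))).
  exists L. split; [|split].
  - intros u v h S. apply (least_bound_unique (HL v (DFres h S))).
    apply is_least_bound_res_sub, Hres, HL.
  - intros u S T HST. apply (proj2 (HL u S)). intros v y [Hy Hv].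
    apply (proj1 (HL u T)). split; auto.
  - intros [u S] [w y]. cbn. split.
    + intros [h Hle]. exists h. intros v y' Hy'.
      pose proof (proj2 (proj2_sig S) v y' Hy') as Hv.
      split; [|exact Hv]. exists (ole_trans Hv h).
      eapply ple_trans; [exact (least_bound_le Hv (HL u S) Hy')|].
      rewrite <- (res_comp h Hv (ole_trans Hv h)). apply res_mono. exact Hle.
    + intros [h Hi]. exists h. apply (proj2 (HL u S)). intros v y' [Hy' Hv].
      destruct (Hi v y' Hy') as [[hv Hle] _]. exists Hv.
      rewrite (res_comp h Hv hv). exact Hle.
Qed.

Definition res_closed (T : subfam F) : Prop :=
  forall u v (h : ole v u) x, T u x -> T v (res F h x).

Definition dominated_on (T : subfam F) {v : X} (y : F v) : X -> Prop :=
  fun c => exists hc : ole c v, exists t, T c t /\ ple F c (res F hc y) t.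

(* The downsheaf of F^u generated by [T]: sections that are locally below [T]. *)
Definition down_closure (T : subfam F) (u : X) : subfam F :=
  fun v y => ole v u /\ ole v (osup (dominated_on T y)).

Lemma down_closure_downsheaf_in {T : subfam F} (u : X) :
  res_closed T -> is_downsheaf_in u (down_closure T u).
Proof.
  intros HT. split; [split; [split|]|].
  - intros a b hab x [Hau Hcov]. split; [exact (ole_trans hab Hau)|].
    eapply ole_trans; [apply (omeet_glb (ole_refl b) (ole_trans hab Hcov))|].
    eapply ole_trans; [apply odistr|].
    apply osup_least. intros e [c [[hc [t [Ht Hle]]] ->]].
    apply osup_ub. exists (omeet_l b c), (res F (omeet_r b c) t). split.
    + apply HT. exact Ht.
    + rewrite (res_comp hab (omeet_l b c) (ole_trans (omeet_r b c) hc)).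
      rewrite <- (res_comp hc (omeet_r b c) (ole_trans (omeet_r b c) hc)).
      apply res_mono. exact Hle.
  - intros w C hC Hcov x Hx. split.
    + apply (ole_trans Hcov). apply osup_least. intros c hc. exact (proj1 (Hx c hc)).
    + apply (ole_trans Hcov). apply osup_least. intros c hc.
      apply (ole_trans (proj2 (Hx c hc))). apply osup_mono.
      intros e [he [t [Ht Hle]]]. exists (ole_trans he (hC c hc)), t. split; [exact Ht|].
      rewrite (res_comp (hC c hc) he (ole_trans he (hC c hc))) in Hle. exact Hle.
  - intros a x y Hxy [Hu Hc]. split; [exact Hu|].
    apply (ole_trans Hc). apply osup_mono. intros e [he [t [Ht Hle]]].
    exists he, t. split; [exact Ht|]. eapply ple_trans; [|exact Hle].
    apply res_mono. exact Hxy.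
  - intros v y [Hv _]. exact Hv.
Qed.

Lemma incl_down_closure_dn (T : subfam F) (u w : X) (z : F w) :
  ole w u ->
  (incl (res_sub (down_closure T u) w) (dn z) <-> incl (res_sub T w) (dn z)).
Proof.
  intros hwu. split.
  - intros H v y [Hy Hv]. apply H. split; [|exact Hv]. split.
    + exact (ole_trans Hv hwu).
    + apply osup_ub. exists (ole_refl v), y. split; [exact Hy|].
      rewrite res_id. apply ple_refl.
  - intros H v y [[_ Hcov] Hv]. exists Hv.
    apply (@pos3 X F v (dominated_on T y)
             (fun c hc => match hc with ex_intro _ h _ => h end) Hcov).
    intros c [hc [t [Ht Hle]]]. cbn.
    eapply ple_trans; [exact Hle|].
    destruct (H c t (conj Ht (ole_trans hc Hv))) as [h' Hle'].
    rewrite (res_comp Hv hc h'). exact Hle'.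
Qed.

Lemma dn_res_closed {v : X} (y : F v) : res_closed (dn y).
Proof. exact (proj1 (proj1 (proj1 (dn_downsheaf_in y)))). Qed.

Definition restrictions {u : X} (A : F u -> Prop) : subfam F :=
  fun w t => exists a (h : ole w u), A a /\ t = res F h a.

Lemma restrictions_res_closed {u : X} (A : F u -> Prop) : res_closed (restrictions A).
Proof.
  intros a b hba x [c [h [Hc ->]]]. exists c, (ole_trans hba h). split; [exact Hc|].
  apply res_comp.
Qed.

Section StableLeastBounds.
Hypothesis HLB : stable_least_bounds.

Lemma least_bound_res_closed {T : subfam F} :
  res_closed T -> forall u, exists s : F u,
    forall v (h : ole v u), is_least_bound T (res F h s).
Proof.
  intros HT u. pose (G := exist _ _ (down_closure_downsheaf_in u HT) : DF F u).
  destruct (proj1 HLB u G) as [s Hs].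
  exists s. intros v h. apply (least_bound_transfer (S := down_closure T u)).
  - intros z'. apply incl_down_closure_dn. exact h.
  - exact (proj2 HLB u v h G s Hs).
Qed.

Lemma sup_extends_res_closed (S : subfam F) : res_closed S -> sup_extends S.
Proof.
  intros HS. destruct (least_bound_res_closed HS (otop X)) as [p Hp].
  set (d := osup (fun v => exists y : F v, S v y)).
  exists (existT _ d (res F (otop_max d) p)). split.
  - split.
    + intros [v y] Hy. unfold pt_in in Hy; cbn in Hy.
      assert (hvd : ole v d) by (apply osup_ub; exists y; exact Hy).
      exists hvd. cbn. rewrite (res_comp (otop_max d) hvd (otop_max v)).
      pose proof (least_bound_le (ole_refl v) (Hp v (otop_max v)) Hy) as Hb.
      rewrite res_id in Hb. exact Hb.
    + intros [w q] Hq. cbn.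
      assert (hdw : ole d w).
      { apply osup_least. intros v [y Hy]. destruct (Hq (existT _ v y) Hy) as [h _]. exact h. }
      exists hdw. apply (proj2 (Hp d (otop_max d))). intros v y [Hy Hv].
      destruct (Hq (existT _ v y) Hy) as [hvw Hle].
      exists Hv. rewrite (res_comp hdw Hv hvw). exact Hle.
  - exists p. split; [reflexivity|]. intros u. apply Hp.
Qed.

Lemma join_restrictions {u : X} (A : F u -> Prop) :
  exists s : F u,
    (forall v (h : ole v u), is_least_bound (restrictions A) (res F h s)) /\
    (forall x, A x -> ple F u x s) /\
    (forall t, (forall x, A x -> ple F u x t) -> ple F u s t).
Proof.
  destruct (least_bound_res_closed (restrictions_res_closed A) u) as [s Hs].
  exists s. split; [exact Hs|].
  pose proof (Hs u (ole_refl u)) as Hu. rewrite res_id in Hu. split.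
  - intros x Hx.
    assert (Hxr : restrictions A u x)
      by (exists x, (ole_refl u); split; [exact Hx | symmetry; apply res_id]).
    pose proof (least_bound_le (ole_refl u) Hu Hxr) as Hb. rewrite res_id in Hb. exact Hb.
  - intros t Ht. apply (proj2 Hu). intros w t' [[a [h [Ha ->]]] Hw].
    exists Hw. rewrite (res_irrel F h Hw). apply res_mono, Ht. exact Ha.
Qed.

Lemma stable_least_bounds_complete_lattice (u : X) : is_complete_lattice F u.
Proof.
  intros A. destruct (join_restrictions A) as [s [_ Hjoin]]. exists s. exact Hjoin.
Qed.

Lemma dn_least_bound_adjunction {u v : X} (h : ole v u) {y : F v} {s : F u} :
  is_least_bound (dn y) s -> forall x : F u, ple F u s x <-> ple F v y (res F h x).
Proof.
  intros Hs x. split.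
  - intros Hle. eapply ple_trans; [exact (least_bound_le h Hs (dn_self y))|].
    apply res_mono. exact Hle.
  - intros Hle. apply (proj2 Hs). intros w y' [[hw Hle'] Hwu]. exists Hwu.
    eapply ple_trans; [exact Hle'|].
    rewrite <- (res_comp h hw Hwu). apply res_mono. exact Hle.
Qed.

Lemma stable_least_bounds_res_adjoints : res_adjoints F.
Proof.
  intros u v h.
  assert (Hext : forall y : F v, exists s : F u,
             is_least_bound (dn y) s /\ res F h s = y).
  { intros y. destruct (least_bound_res_closed (dn_res_closed y) u) as [s Hs].
    exists s. split.
    - rewrite <- (res_id (ole_refl u) s). apply Hs.
    - exact (least_bound_unique (Hs v h) (dn_least_bound y)). }
  split; [|split].
  - intros y. destruct (Hext y) as [s [_ Hs]]. exists s. exact Hs.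
  - exists (fun y => proj1_sig (constructive_indefinite_description _ (Hext y))).
    intros y. apply dn_least_bound_adjunction.
    exact (proj1 (proj2_sig (constructive_indefinite_description _ (Hext y)))).
  - set (R := fun y : F v => fun x : F u => ple F v (res F h x) y).
    exists (fun y => proj1_sig (constructive_indefinite_description _
                                 (join_restrictions (R y)))).
    intros x y.
    destruct (constructive_indefinite_description _ (join_restrictions (R y)))
      as [s [Hs [Hub Hleast]]]. cbn. split.
    + intros Hle. apply Hub. exact Hle.
    + intros Hle. eapply ple_trans; [apply res_mono; exact Hle|].
      apply (proj2 (Hs v h)). intros w t [[a [ha [Ha ->]]] Hw]. exists Hw.
      rewrite <- (res_comp h Hw ha). apply res_mono. exact Ha.
Qed.

End StableLeastBounds.

Section Adjoints.
Hypotheses (Hlat : forall u, is_complete_lattice F u) (Hadj : res_adjoints F).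

Lemma res_left_adjoint_cancel {u v : X} {h : ole v u} {l : F v -> F u} :
  (forall y x, ple F u (l y) x <-> ple F v y (res F h x)) ->
  forall y, res F h (l y) = y.
Proof.
  intros Hl y. destruct (proj1 (Hadj _ _ h) y) as [x <-].
  apply ple_antisym.
  - apply res_mono, Hl, ple_refl.
  - apply Hl, ple_refl.
Qed.

(* Glue y with l(y|_{w/\v}) <= z, a preimage of y|_{w/\v} in F(v), to a
   section over w \/ v, and lift that section to F(u). *)
Lemma le_res_right_adjoint {u v w : X} {hv : ole v u} {hw : ole w u}
    {r : F v -> F u} :
  (forall x y, ple F v (res F hv x) y <-> ple F u x (r y)) ->
  forall (y : F w) (z : F v),
    ple F _ (res F (omeet_l w v) y) (res F (omeet_r w v) z) ->
    ple F w y (res F hw (r z)).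
Proof.
  intros Hr y z Hyz.
  destruct (Hadj _ _ (omeet_r w v)) as [_ [[l Hl] _]].
  set (z' := l (res F (omeet_l w v) y)).
  assert (Hz'z : ple F v z' z) by (apply Hl; exact Hyz).
  assert (Hyz' : res F (omeet_l w v) y = res F (omeet_r w v) z')
    by (symmetry; apply (res_left_adjoint_cancel Hl)).
  destruct (glue_pair Hyz') as [g [Hgy Hgz']].
  assert (hj : ole (pair_join w v) u)
    by (apply osup_least; intros c [-> | ->]; assumption).
  destruct (proj1 (Hadj _ _ hj) g) as [x <-].
  assert (hwj : ole w (pair_join w v)) by (apply osup_ub; left; reflexivity).
  assert (hvj : ole v (pair_join w v)) by (apply osup_ub; right; reflexivity).
  rewrite <- (Hgy hwj), (res_comp hj hwj hw).
  apply res_mono, Hr. rewrite <- (res_comp hj hvj hv), (Hgz' hvj). exact Hz'z.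
Qed.

(* The least bound is the join of the left adjoints l_v(y), y in S(v); each
   l_v(y) is described by its adjunction property, so no choice is needed. *)
Lemma least_bound_of_adjoints (S : subfam F) (u : X) :
  exists z : F u, is_least_bound S z.
Proof.
  destruct (Hlat u (fun x => exists v (h : ole v u) y, S v y /\
                   (forall x', ple F u x x' <-> ple F v y (res F h x'))))
    as [s [Hub Hleast]].
  exists s. split.
  - intros v y [Hy Hv]. exists Hv.
    destruct (Hadj _ _ Hv) as [_ [[l Hl] _]].
    apply Hl, Hub. exists v, Hv, y. split; [exact Hy | apply Hl].
  - intros z' Hz'. apply Hleast. intros x [v [h [y [Hy Hx]]]].
    apply Hx. destruct (Hz' v y (conj Hy h)) as [h' Hle].
    rewrite (res_irrel F h h'). exact Hle.
Qed.

Lemma least_bound_res_of_adjoints {S : subfam F} {u v : X} (h : ole v u) {z : F u} :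
  res_closed S -> is_least_bound S z -> is_least_bound S (res F h z).
Proof.
  intros HS Hz. destruct (Hadj _ _ h) as [_ [_ [r Hr]]]. split.
  - intros w y [Hy Hw]. exists Hw.
    rewrite (res_comp h Hw (ole_trans Hw h)).
    exact (least_bound_le (ole_trans Hw h) Hz Hy).
  - intros z' Hz'.
    assert (Hzr : ple F u z (r z')).
    { apply (proj2 Hz). intros w y [Hy Hw]. exists Hw.
      apply (le_res_right_adjoint Hr).
      destruct (Hz' _ _ (conj (HS w _ (omeet_l w v) y Hy) (omeet_r w v))) as [h' Hle].
      rewrite (res_irrel F (omeet_r w v) h'). exact Hle. }
    apply Hr. exact Hzr.
Qed.

Lemma adjoints_stable_least_bounds : stable_least_bounds.
Proof.
  split.
  - intros u S. apply least_bound_of_adjoints.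
  - intros u v h S z. apply least_bound_res_of_adjoints.
    exact (proj1 (proj1 (proj1 (proj2_sig S)))).
Qed.

End Adjoints.

Lemma sup_extends_stable_least_bounds :
  (forall S : subfam F, is_downsheaf S -> sup_extends S) -> stable_least_bounds.
Proof.
  intros H. split.
  - intros u S. destruct (H _ (proj1 (proj2_sig S))) as [_ [_ [p [_ Hp]]]].
    exists (res F (otop_max u) p). apply Hp.
  - intros u v h S z Hz. destruct (H _ (proj1 (proj2_sig S))) as [_ [_ [p [_ Hp]]]].
    rewrite (least_bound_unique Hz (Hp u)), (res_comp (otop_max u) h (otop_max v)).
    apply Hp.
Qed.

End Posheaf.

Theorem proposition3p2 (X : Frame) (F : Posheaf X) :
  (complete F <-> (forall S : subfam F, is_downsheaf S -> sup_extends S)) /\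
  (complete F <-> (forall S : subfam F, is_subsheaf S -> sup_extends S)) /\
  (complete F <-> ((forall u : X, is_complete_lattice F u) /\ res_adjoints F)).
Proof.
  split; [|split]; split.
  - intros Hc S HS. apply (sup_extends_res_closed (complete_stable_least_bounds Hc)).
    exact (proj1 (proj1 HS)).
  - intros H. apply stable_least_bounds_complete, sup_extends_stable_least_bounds, H.
  - intros Hc S HS. apply (sup_extends_res_closed (complete_stable_least_bounds Hc)).
    exact (proj1 HS).
  - intros H. apply stable_least_bounds_complete, sup_extends_stable_least_bounds.
    intros S HS. apply H. exact (proj1 HS).
  - intros Hc. pose proof (complete_stable_least_bounds Hc) as HLB.
    exact (conj (stable_least_bounds_complete_lattice HLB)
                (stable_least_bounds_res_adjoints HLB)).
  - intros [Hlat Hadj]. apply stable_least_bounds_complete.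
    exact (adjoints_stable_least_bounds Hlat Hadj).
Qed.
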